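(* Let $\mu(x,t)=\min(F(x,t),G(x,t))$. Then for all $x_1,x_2,t>0$, $$\int_{x_1}^{x_2}m(x,t)\,dx=\mu(x_1,t)-\mu(x_2,t),$$ and for all $x,t_1,t_2>0$, $$\int_{t_1}^{t_2}q(x,t)\,dt=\mu(x,t_2)-\mu(x,t_1).$$
   Context: Standing assumptions: $u_0,u_b:[0,\infty)\to\mathbb{R}$ bounded measurable with $u_b>0$; $\rho_0,\rho_b:[0,\infty)\to(0,\infty)$ positive locally bounded measurable. For $x,t,y,\tau\ge0$: $F(y,x,t)=\int_0^y[tu_0(\eta)+\eta-x]\rho_0(\eta)\,d\eta$, $G(\tau,x,t)=\int_0^\tau[x-u_b(\eta)(t-\eta)]\rho_b(\eta)u_b(\eta)\,d\eta$, $F(x,t)=\min_{y\ge0}F(y,x,t)$, $G(x,t)=\min_{\tau\ge0}G(\tau,x,t)$ (minima attained); $y_*$ is the smallest minimizer of $F(\cdot,x,t)$ and $\tau_*$ the smallest minimizer of $G(\cdot,x,t)$. For $x,t>0$: $m(x,t)=\int_0^{y_*(x,t)}\rho_0$ and $q(x,t)=\int_0^{y_*(x,t)}\rho_0u_0$ if $F(x,t)\le G(x,t)$; $m(x,t)=-\int_0^{\tau_*(x,t)}\rho_bu_b$ and $q(x,t)=-\int_0^{\tau_*(x,t)}\rho_bu_b^2$ if $F(x,t)>G(x,t)$. *)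

From HB Require Import structures.
From mathcomp Require Import all_boot all_order all_algebra.
From mathcomp Require Import all_classical all_reals all_analysis.
Set Implicit Arguments. Unset Strict Implicit. Unset Printing Implicit Defensive.
Import Order.TTheory GRing.Theory Num.Theory.
Import numFieldNormedType.Exports.
Local Open Scope classical_set_scope.
Local Open Scope ring_scope.

Section Defs.
Variable R : realType.
Notation leb := (@lebesgue_measure R).

Definition Iab (a b : R) (f : R -> R) : R := \int[leb]_(z in `[a, b]) f z.

Definition oint (a b : R) (f : R -> R) : R :=
  if a <= b then Iab a b f else - Iab b a f.

Variables (u0 ub rho0 rhob : R -> R).

Definition Fyxt (y x t : R) : R :=
  Iab 0 y (fun eta => (t * u0 eta + eta - x) * rho0 eta).

Definition Gtxt (tau x t : R) : R :=
  Iab 0 tau (fun eta => (x - ub eta * (t - eta)) * rhob eta * ub eta).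

(* F(x,t) = min_{y >= 0} F(y,x,t)  (the minimum is attained, so it is the inf) *)
Definition Fmin (x t : R) : R := inf [set Fyxt y x t | y in `[0, +oo[%classic].
Definition Gmin (x t : R) : R := inf [set Gtxt tau x t | tau in `[0, +oo[%classic].

Definition ystar (x t : R) : R :=
  inf [set y | 0 <= y /\ Fyxt y x t = Fmin x t].
Definition taustar (x t : R) : R :=
  inf [set tau | 0 <= tau /\ Gtxt tau x t = Gmin x t].

Definition mdens (x t : R) : R :=
  if Fmin x t <= Gmin x t then Iab 0 (ystar x t) rho0
  else - Iab 0 (taustar x t) (fun eta => rhob eta * ub eta).

Definition qflux (x t : R) : R :=
  if Fmin x t <= Gmin x t then Iab 0 (ystar x t) (fun eta => rho0 eta * u0 eta)
  else - Iab 0 (taustar x t) (fun eta => rhob eta * ub eta ^+ 2).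

Definition mumin (x t : R) : R := Num.min (Fmin x t) (Gmin x t).

End Defs.

From HB Require Import structures.
From mathcomp Require Import all_boot all_order all_algebra.
From mathcomp Require Import all_classical all_reals all_analysis.
From mathcomp Require Import ring lra measurable_realfun.
Import Order.TTheory GRing.Theory Num.Theory.
Import numFieldNormedType.Exports.
Local Open Scope classical_set_scope.
Local Open Scope ring_scope.
Set Implicit Arguments. Unset Strict Implicit. Unset Printing Implicit Defensive.

(* For fixed t, mu(., t) is the smaller of two infima of functions affine in x,
   so a minimizer at x gives the supergradient inequality
   mu(z,t) <= mu(x,t) - m(x,t) (z - x); in the same way q(x, .) is a
   supergradient of mu(x, .).  A supergradient g of phi on (0, +oo) is
   nonincreasing, hence integrable on compact intervals, and on each cell
   [c, d] the difference between the integral of g and phi d - phi c is at most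
   (g c - g d)(d - c); these errors telescope over a uniform partition, which
   gives the fundamental theorem of calculus for g.  Smallest minimizers exist
   because y |-> F(y,x,t) is locally Lipschitz and nondecreasing for large y. *)

Section interval_integral.
Context {R : realType}.
Notation leb := (@lebesgue_measure R).
Implicit Types (f : R -> R) (a b c : R).

Lemma integrable_itv_bounded f a b M : measurable_fun `[a, b] f ->
  (forall z, a <= z <= b -> `|f z| <= M) -> leb.-integrable `[a, b] (EFin \o f).
Proof.
move=> mf fM; apply: measurable_bounded_integrable => //.
- by move: (lebesgue_measure_itv `[a, b]%R) => /= ->; case: ifP => _; rewrite ?ltry.
- exists M; split; first exact: num_real.
  move=> M' MM' z /=; rewrite in_itv /= => zab.
  by rewrite (le_trans (fM _ zab)) // ltW.
Qed.

Lemma Iab_xx f a : Iab a a f = 0.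
Proof. by rewrite /Iab set_itv1 Rintegral_set1. Qed.

Lemma Iab_split f a b c : a <= c -> c <= b -> leb.-integrable `[a, b] (EFin \o f) ->
  Iab a b f = Iab a c f + Iab c b f.
Proof.
move=> ac cb intf.
have intcb : leb.-integrable `]c, b] (EFin \o f).
  by apply: integrableS intf => //; apply: subset_itvr; rewrite bnd_simp.
have := @Rintegral_itvB R f (BLeft a) (BRight b) c intf.
rewrite !bnd_simp Rintegral_itv_obnd_cbnd // => /(_ ac cb) E.
by rewrite /Iab -E addrC subrK.
Qed.

Lemma Iab_bounds f a b lo hi : a <= b -> leb.-integrable `[a, b] (EFin \o f) ->
  (forall z, a <= z <= b -> lo <= f z <= hi) ->
  lo * (b - a) <= Iab a b f <= hi * (b - a).
Proof.
move=> ab intf fb.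
have length_ab : fine (leb `[a, b]) = b - a.
  rewrite lebesgue_measure_itv /= lte_fin; case: ltgtP ab => // -> _.
  by rewrite subrr.
have intcst k : leb.-integrable `[a, b] (EFin \o fun=> k).
  exact: (@integrable_itv_bounded _ _ _ `|k|).
rewrite -length_ab -!Rintegral_cst //.
by apply/andP; split; apply: le_Rintegral => // z;
  rewrite /= in_itv /= => /fb /andP[].
Qed.

Lemma IabN f a b : leb.-integrable `[a, b] (EFin \o f) ->
  Iab a b (fun x => - f x) = - Iab a b f.
Proof.
move=> intf; rewrite /Iab -mulN1r -RintegralZl //.
by apply: eq_Rintegral => x _; rewrite mulN1r.
Qed.

End interval_integral.

Lemma le0_bounded_multiples (R : archiFieldType) (x K : R) :
  (forall n : nat, (0 < n)%N -> x * n%:R <= K) -> x <= 0.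
Proof.
move=> xK; rewrite leNgt; apply/negP => x0.
have := xK (Num.truncn (K / x)).+1 isT.
have := truncnS_gt (K / x).
by rewrite -(ltr_pM2l x0) mulrCA mulfV ?gt_eqF // mulr1; lra.
Qed.

Section supergradient.
Context {R : realType}.
Notation leb := (@lebesgue_measure R).
Variables phi g : R -> R.
Hypothesis phi_supergrad :
  forall x z, 0 < x -> 0 < z -> phi z <= phi x + g x * (z - x).

Lemma supergrad_antitone x z : 0 < x -> x <= z -> g z <= g x.
Proof.
move=> x0; rewrite le_eqVlt => /predU1P[-> // | xz].
have z0 := lt_trans x0 xz.
have := phi_supergrad x0 z0; have := phi_supergrad z0 x0; nra.
Qed.

Lemma integrable_supergrad a b : 0 < a -> leb.-integrable `[a, b] (EFin \o g).
Proof.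
move=> a0.
pose g_clamped z := g (Num.max a (Num.min z b)).
have mg : measurable_fun `[a, b] g.
  have : measurable_fun `[a, b] g_clamped.
    apply: nonincreasing_measurable => // s t st.
    by apply: supergrad_antitone; rewrite ?lt_max ?a0 // le_max2 // le_min2.
  apply: eq_measurable_fun => z; rewrite inE /= in_itv /= => /andP[az zb].
  by rewrite /g_clamped (min_l zb) (max_r az).
apply: (@integrable_itv_bounded _ _ _ _ (`|g a| + `|g b|)) => // z /andP[az zb].
have := supergrad_antitone a0 az; have := supergrad_antitone (lt_le_trans a0 az) zb.
have := ler_norm (g a); have := ler_norm (- g b); rewrite normrN ler_norml.
have := normr_ge0 (g a); have := normr_ge0 (g b); lra.
Qed.

Lemma supergrad_step c d : 0 < c -> c <= d ->
  `|Iab c d g - (phi d - phi c)| <= (g c - g d) * (d - c).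
Proof.
move=> c0 cd; have d0 := lt_le_trans c0 cd.
have g_between z : c <= z <= d -> g d <= g z <= g c.
  move=> /andP[cz zd].
  by rewrite supergrad_antitone ?(lt_le_trans c0 cz) ?supergrad_antitone.
have /andP[lo hi] := Iab_bounds cd (integrable_supergrad d c0) g_between.
have := phi_supergrad c0 d0; have := phi_supergrad d0 c0.
rewrite ler_norml; nra.
Qed.

(* The cell errors of [supergrad_step] telescope. *)
Lemma supergrad_partition a h (k : nat) : 0 < a -> 0 < h ->
  `|Iab a (a + k%:R * h) g - (phi (a + k%:R * h) - phi a)|
    <= (g a - g (a + k%:R * h)) * h.
Proof.
move=> a0 h0; elim: k => [|k IH].
  by rewrite mul0r addr0 Iab_xx !subrr normr0 mul0r.
set c := a + k%:R * h in IH *.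
have -> : a + k.+1%:R * h = c + h by rewrite /c -addn1 natrD mulrDl mul1r addrA.
have ac : a <= c by rewrite /c lerDl mulr_ge0 // ltW.
have cch : c <= c + h by rewrite lerDl ltW.
have := supergrad_step (lt_le_trans a0 ac) cch; rewrite [c + h - c]addrC addKr.
rewrite (@Iab_split _ _ a (c + h) c) ?(le_trans ac cch) ?integrable_supergrad //.
have := ler_normD (Iab a c g - (phi c - phi a))
                  (Iab c (c + h) g - (phi (c + h) - phi c)).
have -> : Iab a c g + Iab c (c + h) g - (phi (c + h) - phi a) =
  (Iab a c g - (phi c - phi a)) + (Iab c (c + h) g - (phi (c + h) - phi c)) by ring.
lra.
Qed.

Lemma Iab_supergrad a b : 0 < a -> a <= b -> Iab a b g = phi b - phi a.
Proof.
move=> a0 ab; apply/eqP; rewrite -subr_eq0 -normr_eq0 eq_le normr_ge0 andbT.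
apply: (le0_bounded_multiples (K := (g a - g b) * (b - a))) => n n0.
have n0' : 0 < n%:R :> R by rewrite ltr0n.
have [<-|ab'] := eqVneq a b; first by rewrite Iab_xx !subrr normr0 !mul0r.
have h0 : 0 < (b - a) / n%:R by rewrite divr_gt0 // subr_gt0 lt_neqAle ab' ab.
have := supergrad_partition n a0 h0.
have -> : a + n%:R * ((b - a) / n%:R) = b.
  by rewrite mulrC -mulrA mulVf ?mulr1 ?subrKC // gt_eqF.
by rewrite -(ler_pM2r n0') -mulrA divfK ?gt_eqF.
Qed.

Lemma oint_supergrad a b : 0 < a -> 0 < b -> oint a b g = phi b - phi a.
Proof.
move=> a0 b0; rewrite /oint; case: leP => [ab | /ltW ba].
  exact: Iab_supergrad.
by rewrite Iab_supergrad // opprB.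
Qed.

End supergradient.

Lemma oint_subgrad (R : realType) (phi g : R -> R) :
  (forall x z, 0 < x -> 0 < z -> phi x + g x * (z - x) <= phi z) ->
  forall a b, 0 < a -> 0 < b -> oint a b g = phi b - phi a.
Proof.
move=> phi_subgrad a b a0 b0.
have neg_supergrad x z : 0 < x -> 0 < z ->
    - phi z <= - phi x + - g x * (z - x).
  by move=> x0 z0; have := phi_subgrad x z x0 z0; rewrite mulNr; lra.
have int_g c d : 0 < c -> lebesgue_measure.-integrable `[c, d] (EFin \o g).
  move=> c0; have := integrableN (integrable_supergrad neg_supergrad d c0).
  by apply: eq_integrable => // x _; rewrite /= opprK.
have := oint_supergrad neg_supergrad a0 b0.
by rewrite /oint; case: leP => [_ | /ltW _]; rewrite IabN ?int_g //; lra.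
Qed.

Lemma lipschitz_within_continuous (R : realType) (A : set R) (f : R -> R) L :
  (forall x y, A x -> A y -> `|f x - f y| <= L * `|x - y|) ->
  {within A, continuous f}.
Proof.
move=> fL; apply/subspace_continuousP => x Ax; apply/cvgrPdist_lt => e e0.
have d0 : 0 < e / (`|L| + 1) by rewrite divr_gt0 // ltr_wpDl.
exists (e / (`|L| + 1)) => //= y /= xy Ay.
apply: le_lt_trans (fL _ _ Ax Ay) _.
apply: le_lt_trans (ler_wpM2r (normr_ge0 _) (ler_norm L)) _.
move: xy; rewrite ltr_pdivlMr ?ltr_wpDl // => xy.
have := normr_ge0 (x - y); have := normr_ge0 L; nra.
Qed.

Section halfline_argmin.
Context {R : realType}.
Variables (Phi : R -> R) (Y : R).
Hypothesis Y_ge0 : 0 <= Y.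
Hypothesis Phi_lipschitz : forall B, exists2 L, 0 <= L &
  forall y y', 0 <= y <= B -> 0 <= y' <= B -> `|Phi y - Phi y'| <= L * `|y - y'|.
Hypothesis Phi_ge_PhiY : forall y, Y <= y -> Phi Y <= Phi y.

Let m := inf [set Phi y | y in `[0, +oo[%classic].

Lemma Phi_min_in_segment : exists2 c, 0 <= c <= Y & forall y, 0 <= y -> Phi c <= Phi y.
Proof.
have [L _ PhiL] := Phi_lipschitz Y.
have Phi_cont : {within `[0, Y], continuous Phi}.
  by apply: (@lipschitz_within_continuous _ _ _ L) => x y /=; rewrite !in_itv; apply: PhiL.
have [c cY c_min] := EVT_min Y_ge0 Phi_cont.
have c_min_seg y : 0 <= y <= Y -> Phi c <= Phi y by move=> yY; apply: c_min; rewrite in_itv.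
exists c; first by rewrite in_itv in cY.
move=> y y0; have [yY | /ltW Yy] := leP y Y; first by rewrite c_min_seg ?y0.
by apply: le_trans (Phi_ge_PhiY Yy); rewrite c_min_seg ?Y_ge0 ?lexx.
Qed.

Lemma Phi_attains_inf : exists2 c, 0 <= c & Phi c = m /\ forall y, 0 <= y -> m <= Phi y.
Proof.
have [c /andP[c0 _] c_min] := Phi_min_in_segment.
have Phi_c_lb : lbound [set Phi y | y in `[0, +oo[%classic] (Phi c).
  by move=> _ [z /= + <-]; rewrite in_itv /= andbT; apply: c_min.
have Phi_c_in : [set Phi y | y in `[0, +oo[%classic] (Phi c).
  by exists c => //=; rewrite in_itv /= c0.
have m_c : m = Phi c.
  apply/eqP; rewrite eq_le; apply/andP; split.
    by apply: ge_inf => //; exists (Phi c).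
  by apply: lb_le_inf => //; exists (Phi c).
by exists c => //; rewrite m_c; split => // y /c_min.
Qed.

(* The set of minimizers is closed ([Phi] is continuous) and bounded below, so
   it contains its infimum. *)
Lemma smallest_minimizer :
  let ys := inf [set y | 0 <= y /\ Phi y = m] in
  [/\ 0 <= ys, Phi ys = m & forall y, 0 <= y -> m <= Phi y].
Proof.
move=> ys; set S := [set y | 0 <= y /\ Phi y = m].
have [c c0 [Phi_c m_le]] := Phi_attains_inf.
have S_inf : S !=set0 /\ has_lbound S by split; [exists c | exists 0 => y []].
have ys0 : 0 <= ys by apply: lb_le_inf S_inf.1 _ => y [].
split => //; apply/eqP; rewrite eq_le m_le // andbT leNgt; apply/negP => gap.
have [L L0 PhiL] := Phi_lipschitz (ys + 1).
pose eps := Num.min 1 ((Phi ys - m) / (L + 1)).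
have eps0 : 0 < eps by rewrite lt_min ltr01 divr_gt0 ?subr_gt0 //; lra.
have eps_gap : eps * (L + 1) <= Phi ys - m.
  by rewrite -ler_pdivlMr ?ge_min ?lexx ?orbT //; lra.
have eps1 : eps <= 1 by rewrite ge_min lexx.
have [s [s0 Phi_s] s_lt] := inf_adherent eps0 S_inf.
have s_ge : ys <= s by apply: ge_inf => //; exact: S_inf.2.
have := PhiL s ys; rewrite s0 ys0 Phi_s (ger0_norm (_ : 0 <= s - ys)) ?subr_ge0 //.
move=> /(_ ltac:(lra) ltac:(lra)); rewrite ler_norml => /andP[lo _].
have : L * (s - ys) <= L * eps by apply: ler_wpM2l => //; lra.
nra.
Qed.

End halfline_argmin.

Section locally_bounded.
Context {R : realType}.
Notation leb := (@lebesgue_measure R).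
Implicit Types (f g h : R -> R).

Definition locally_bounded f :=
  forall B : R, exists K : R, forall y, 0 <= y <= B -> `|f y| <= K.

Definition measurable_halfline f := measurable_fun (`[0, +oo[%classic : set R) f.

Lemma locally_boundedM f g :
  locally_bounded f -> locally_bounded g -> locally_bounded (fun y => f y * g y).
Proof.
move=> fB gB B; have [K1 fK1] := fB B; have [K2 gK2] := gB B.
by exists (K1 * K2) => y yB; rewrite normrM ler_pM ?fK1 ?gK2.
Qed.

Lemma locally_boundedD f g :
  locally_bounded f -> locally_bounded g -> locally_bounded (fun y => f y + g y).
Proof.
move=> fB gB B; have [K1 fK1] := fB B; have [K2 gK2] := gB B.
by exists (K1 + K2) => y yB; rewrite (le_trans (ler_normD _ _)) ?lerD ?fK1 ?gK2.
Qed.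

Lemma locally_boundedN f : locally_bounded f -> locally_bounded (fun y => - f y).
Proof. by move=> fB B; have [K fK] := fB B; exists K => y yB; rewrite normrN fK. Qed.

Lemma locally_bounded_cst c : locally_bounded (fun _ => c).
Proof. by move=> B; exists `|c|. Qed.

Lemma locally_bounded_id : locally_bounded id.
Proof. by move=> B; exists B => y /andP[y0 yB]; rewrite ger0_norm. Qed.

Lemma measurable_halflineM f g :
  measurable_halfline f -> measurable_halfline g -> measurable_halfline (fun y => f y * g y).
Proof. exact: measurable_funM. Qed.

Lemma measurable_halflineD f g :
  measurable_halfline f -> measurable_halfline g -> measurable_halfline (fun y => f y + g y).
Proof. exact: measurable_funD. Qed.

Lemma measurable_halflineN f : measurable_halfline f -> measurable_halfline (fun y => - f y).
Proof. exact: measurable_funN. Qed.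

Lemma measurable_halfline_cst c : measurable_halfline (fun _ => c).
Proof. exact: measurable_cst. Qed.

Lemma measurable_halfline_id : measurable_halfline id.
Proof. exact: measurable_id. Qed.

Lemma integrable_locally_bounded f a b : 0 <= a ->
  measurable_halfline f -> locally_bounded f -> leb.-integrable `[a, b] (EFin \o f).
Proof.
move=> a0 mf fB; have [K fK] := fB b.
apply: (@integrable_itv_bounded _ _ _ _ K).
  by apply: measurable_funS mf => //; apply: subset_itv; rewrite bnd_simp.
by move=> z /andP[az zb]; rewrite fK ?zb ?(le_trans a0 az).
Qed.

Lemma IabB_scale a b f1 f2 h c : 0 <= a ->
  measurable_halfline f1 -> locally_bounded f1 ->
  measurable_halfline f2 -> locally_bounded f2 ->
  measurable_halfline h -> locally_bounded h ->
  (forall y, f1 y - f2 y = c * h y) ->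
  Iab a b f1 - Iab a b f2 = c * Iab a b h.
Proof.
move=> a0 mf1 f1B mf2 f2B mh hB f12h.
rewrite /Iab -RintegralB ?integrable_locally_bounded //.
rewrite -RintegralZl ?integrable_locally_bounded //.
by apply: eq_Rintegral => y _; exact: f12h.
Qed.

Section primitive.
Variable f : R -> R.
Hypotheses (mf : measurable_halfline f) (fB : locally_bounded f).

Lemma Iab0_lipschitz B : exists2 L, 0 <= L & forall y y', 0 <= y <= B -> 0 <= y' <= B ->
  `|Iab 0 y f - Iab 0 y' f| <= L * `|y - y'|.
Proof.
have [K fK] := fB B; exists `|K| => // y y'.
wlog yy' : y y' / y <= y'.
  move=> W yB y'B; have [yy'|/ltW y'y] := leP y y'; first exact: W.
  by rewrite distrC (distrC y); apply: W.
move=> /andP[y0 yB] /andP[y'0 y'B].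
rewrite (@Iab_split _ _ 0 y' y) ?integrable_locally_bounded //.
have f_bounded z : y <= z <= y' -> - `|K| <= f z <= `|K|.
  move=> /andP[yz zy']; rewrite -ler_norml (le_trans _ (ler_norm K)) //.
  by rewrite fK ?(le_trans y0 yz) ?(le_trans zy' y'B).
have /andP[lo hi] := Iab_bounds yy' (integrable_locally_bounded y' y0 mf fB) f_bounded.
rewrite opprD addNKr normrN distrC [`|y' - y|]ger0_norm ?subr_ge0 //.
by rewrite ler_norml hi andbT; lra.
Qed.

Lemma Iab0_ge_from Y : 0 <= Y -> (forall y, Y <= y -> 0 <= f y) ->
  forall y, Y <= y -> Iab 0 Y f <= Iab 0 y f.
Proof.
move=> Y0 f_ge0 y Yy; have [K fK] := fB y.
rewrite (@Iab_split _ _ 0 y Y) ?integrable_locally_bounded // lerDl.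
have f_bounded z : Y <= z <= y -> 0 <= f z <= `|K|.
  move=> /andP[Yz zy]; rewrite f_ge0 // (le_trans (ler_norm _)) //.
  by rewrite (le_trans _ (ler_norm K)) ?fK ?zy ?(le_trans Y0 Yz).
have /andP[+ _] := Iab_bounds Yy (integrable_locally_bounded y Y0 mf fB) f_bounded.
by rewrite mul0r.
Qed.

Lemma Iab0_smallest_minimizer Y : 0 <= Y -> (forall y, Y <= y -> 0 <= f y) ->
  let m := inf [set Iab 0 y f | y in `[0, +oo[%classic] in
  let ys := inf [set y | 0 <= y /\ Iab 0 y f = m] in
  [/\ 0 <= ys, Iab 0 ys f = m & forall y, 0 <= y -> m <= Iab 0 y f].
Proof.
by move=> Y0 f_ge0; apply: smallest_minimizer Y0 Iab0_lipschitz (Iab0_ge_from Y0 f_ge0).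
Qed.

End primitive.
End locally_bounded.

Ltac solve_measurable_halfline := solve [repeat first
  [ apply: measurable_halflineM | apply: measurable_halflineD
  | apply: measurable_halflineN | exact: measurable_halfline_cst | exact: measurable_halfline_id | assumption ]].

Ltac solve_locally_bounded := solve [repeat first
  [ apply: locally_boundedM | apply: locally_boundedD | apply: locally_boundedN
  | exact: locally_bounded_cst | exact: locally_bounded_id | assumption ]].

Ltac solve_IabB_scale := apply: IabB_scale => //;
  first [solve_measurable_halfline | solve_locally_bounded | by move=> w; ring].

Section mumin_supergradients.
Context {R : realType}.
Variables (u0 ub rho0 rhob : R -> R) (Mu : R).
Hypotheses (meas_u0 : measurable_halfline u0) (meas_ub : measurable_halfline ub)
  (meas_rho0 : measurable_halfline rho0) (meas_rhob : measurable_halfline rhob).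
Hypotheses (u0_bounded : forall y, 0 <= y -> `|u0 y| <= Mu)
  (ub_bounded : locally_bounded ub)
  (rho0_bounded : locally_bounded rho0) (rhob_bounded : locally_bounded rhob).
Hypotheses (ub_gt0 : forall y, 0 <= y -> 0 < ub y)
  (rho0_gt0 : forall y, 0 <= y -> 0 < rho0 y) (rhob_gt0 : forall y, 0 <= y -> 0 < rhob y).

Let u0_locally_bounded : locally_bounded u0.
Proof. by move=> B; exists Mu => y /andP[y0 _]; apply: u0_bounded. Qed.

Notation F := (Fyxt u0 rho0).
Notation G := (Gtxt ub rhob).
Notation Fm := (Fmin u0 rho0).
Notation Gm := (Gmin ub rhob).
Notation mu := (mumin u0 ub rho0 rhob).

(* Beyond [|x| + t |Mu|] the integrand of [F] is nonnegative, so [F] is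
   nondecreasing there. *)
Lemma ystar_minimizer x t : 0 < t ->
  [/\ 0 <= ystar u0 rho0 x t, F (ystar u0 rho0 x t) x t = Fm x t
    & forall y, 0 <= y -> Fm x t <= F y x t].
Proof.
move=> t0; pose Y := `|x| + t * `|Mu|.
have Y0 : 0 <= Y by rewrite addr_ge0 // mulr_ge0 // ltW.
apply: (@Iab0_smallest_minimizer _ _ _ _ Y Y0); first by solve_measurable_halfline.
  by solve_locally_bounded.
move=> y Yy; have y0 := le_trans Y0 Yy.
rewrite mulr_ge0 ?(ltW (rho0_gt0 y0)) //.
have := u0_bounded y0; rewrite ler_norml => /andP[u0_lo _].
have : 0 <= t * (u0 y + `|Mu|).
  by rewrite mulr_ge0 ?(ltW t0) //; have := ler_norm Mu; lra.
have := ler_norm x; rewrite /Y in Yy; rewrite mulrDr; lra.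
Qed.

(* Beyond [t] the integrand of [G] is nonnegative. *)
Lemma taustar_minimizer x t : 0 < x -> 0 < t ->
  [/\ 0 <= taustar ub rhob x t, G (taustar ub rhob x t) x t = Gm x t
    & forall tau, 0 <= tau -> Gm x t <= G tau x t].
Proof.
move=> x0 t0.
apply: (@Iab0_smallest_minimizer _ _ _ _ t (ltW t0)); first by solve_measurable_halfline.
  by solve_locally_bounded.
move=> y ty; have y0 := le_trans (ltW t0) ty.
rewrite !mulr_ge0 ?(ltW (ub_gt0 y0)) ?(ltW (rhob_gt0 y0)) //.
have := ub_gt0 y0; nra.
Qed.

Lemma mumin_supergrad_x t x z : 0 < t -> 0 < x -> 0 < z ->
  mu z t <= mu x t - mdens u0 ub rho0 rhob x t * (z - x).
Proof.
move=> t0 x0 z0; rewrite /mumin /mdens.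
case: (leP (Fm x t) (Gm x t)) => _.
- have [ys0 Fys _] := ystar_minimizer x t0.
  have [_ _ Fmin_le_z] := ystar_minimizer z t0.
  set ys := ystar u0 rho0 x t in ys0 Fys *.
  have F_affine : F ys z t - F ys x t = (x - z) * Iab 0 ys rho0.
    solve_IabB_scale.
  by rewrite ge_min (le_trans (Fmin_le_z ys ys0)) //; lra.
- have [ts0 Gts _] := taustar_minimizer x0 t0.
  have [_ _ Gmin_le_z] := taustar_minimizer z0 t0.
  set ts := taustar ub rhob x t in ts0 Gts *.
  have G_affine : G ts z t - G ts x t = (z - x) * Iab 0 ts (fun w => rhob w * ub w).
    solve_IabB_scale.
  by rewrite ge_min (le_trans (Gmin_le_z ts ts0)) ?orbT //; lra.
Qed.

Lemma mumin_supergrad_t x t s : 0 < x -> 0 < t -> 0 < s ->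
  mu x s <= mu x t + qflux u0 ub rho0 rhob x t * (s - t).
Proof.
move=> x0 t0 s0; rewrite /mumin /qflux.
case: (leP (Fm x t) (Gm x t)) => _.
- have [ys0 Fys _] := ystar_minimizer x t0.
  have [_ _ Fmin_le_s] := ystar_minimizer x s0.
  set ys := ystar u0 rho0 x t in ys0 Fys *.
  have F_affine : F ys x s - F ys x t = (s - t) * Iab 0 ys (fun w => rho0 w * u0 w).
    solve_IabB_scale.
  by rewrite ge_min (le_trans (Fmin_le_s ys ys0)) //; lra.
- have [ts0 Gts _] := taustar_minimizer x0 t0.
  have [_ _ Gmin_le_s] := taustar_minimizer x0 s0.
  set ts := taustar ub rhob x t in ts0 Gts *.
  have G_affine : G ts x s - G ts x t = (t - s) * Iab 0 ts (fun w => rhob w * ub w ^+ 2).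
    solve_IabB_scale.
  by rewrite ge_min (le_trans (Gmin_le_s ts ts0)) ?orbT //; lra.
Qed.

End mumin_supergradients.

Theorem lemma3p5 (R : realType) (u0 ub rho0 rhob : R -> R) :
  (* u0, ub bounded measurable on [0,oo), ub > 0 *)
  measurable_fun (`[0, +oo[%classic : set R) u0 ->
  measurable_fun (`[0, +oo[%classic : set R) ub ->
  (exists M : R, forall y, 0 <= y -> `|u0 y| <= M) ->
  (exists M : R, forall y, 0 <= y -> `|ub y| <= M) ->
  (forall y, 0 <= y -> 0 < ub y) ->
  (* rho0, rhob positive, locally bounded, measurable on [0,oo) *)
  measurable_fun (`[0, +oo[%classic : set R) rho0 ->
  measurable_fun (`[0, +oo[%classic : set R) rhob ->
  (forall y, 0 <= y -> 0 < rho0 y) ->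
  (forall y, 0 <= y -> 0 < rhob y) ->
  (forall b : R, exists M : R, forall y, 0 <= y <= b -> `|rho0 y| <= M) ->
  (forall b : R, exists M : R, forall y, 0 <= y <= b -> `|rhob y| <= M) ->
  (forall x1 x2 t : R, 0 < x1 -> 0 < x2 -> 0 < t ->
     oint x1 x2 (fun x => mdens u0 ub rho0 rhob x t)
     = mumin u0 ub rho0 rhob x1 t - mumin u0 ub rho0 rhob x2 t) /\
  (forall x t1 t2 : R, 0 < x -> 0 < t1 -> 0 < t2 ->
     oint t1 t2 (fun t => qflux u0 ub rho0 rhob x t)
     = mumin u0 ub rho0 rhob x t2 - mumin u0 ub rho0 rhob x t1).
Proof.
move=> meas_u0 meas_ub [Mu u0_bounded] [Mb ub_bounded] ub_gt0 meas_rho0 meas_rhob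
  rho0_gt0 rhob_gt0 rho0_bounded rhob_bounded.
have ub_locally_bounded : locally_bounded ub.
  by move=> B; exists Mb => y /andP[y0 _]; apply: ub_bounded.
have supergrad_x := mumin_supergrad_x meas_u0 meas_ub meas_rho0 meas_rhob u0_bounded
  ub_locally_bounded rho0_bounded rhob_bounded ub_gt0 rho0_gt0 rhob_gt0.
have supergrad_t := mumin_supergrad_t meas_u0 meas_ub meas_rho0 meas_rhob u0_bounded
  ub_locally_bounded rho0_bounded rhob_bounded ub_gt0 rho0_gt0 rhob_gt0.
split=> [x1 x2 t x10 x20 t0 | x t1 t2 x0 t10 t20].
- rewrite (@oint_subgrad _ (fun x => - mumin u0 ub rho0 rhob x t)) //; first lra.
  by move=> x z x0 z0; have := supergrad_x t x z t0 x0 z0; lra.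
- by apply: oint_supergrad => // t s t0 s0; apply: supergrad_t.
Qed.
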